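(* Let $X\subset\mathbb{R}^n$ and $U\subset\mathbb{R}^m$ be compact, $f:X\times U\to\mathbb{R}^n$ Lipschitz continuous, and consider $\dot{\mathbf{x}}(t)=f(\mathbf{x}(t),\mathbf{u}(t))$. Let $\Phi=\bigwedge_{i=1}^N\phi_i$ be an STL specification of the fragment described in the context, over $[0,T]$, such that $\Phi_a(t)\neq\emptyset$ for all $t\in[0,T]$. Let $W=X\times[0,T]$ and $\mathcal{S}^\Phi(t)=\{(x,t)\in W \mid \min_{\varphi_i\in\Phi_a(t)}\rho^{\varphi_i}(x)\geq 0\}$. Suppose there exist a time-varying set $\mathcal{C}^\Phi(t)\subset\mathcal{S}^\Phi(t)$, a continuously differentiable function $\mathcal{B}:W\to\mathbb{R}$, a continuous controller $g:X\times[0,T]\to U$ and an extended class $\mathcal{K}$ function $\alpha$ such that: $\mathcal{B}(x,t)\geq 0$ for all $(x,t)\in\mathcal{C}^\Phi(t)$; $\mathcal{B}(x,t)<0$ for all $(x,t)\in W\setminus\mathcal{C}^\Phi(t)$; and $\frac{\partial\mathcal{B}}{\partial x}(x,t) f(x,g(x,t))+\frac{\partial\mathcal{B}}{\partial t}(x,t)\geq-\alpha(\mathcal{B}(x,t))$ for all $(x,t)\in W$. Then the trajectory $\mathbf{x}_{x_0,\mathbf{u}}$ starting from $x_0$ with $(x_0,0)\in\mathcal{C}^\Phi(0)$ under $\mathbf{u}(t)=g(\mathbf{x}(t),t)$ satisfies $(\mathbf{x}_{x_0,\mathbf{u}}(t),t)\in\mathcal{C}^\Phi(t)$ for all $t\in[0,T]$,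 and $\mathbf{x}_{x_0,\mathbf{u}}\models\Phi$.
   Context: STL fragment: a predicate $\mu$ is given by a function $h:X\to\mathbb{R}$ and is true at $x$ iff $h(x)\geq0$. Non-temporal formulas $\varphi ::= \mathsf{true}\mid\mu\mid\lnot\varphi\mid\varphi_1\wedge\varphi_2\mid\varphi_1\vee\varphi_2$, with pointwise robustness $\rho^\mu(x)=h(x)$, $\rho^{\lnot\varphi}=-\rho^\varphi$, $\rho^{\varphi_1\wedge\varphi_2}=\min(\rho^{\varphi_1},\rho^{\varphi_2})$, $\rho^{\varphi_1\vee\varphi_2}=\max(\rho^{\varphi_1},\rho^{\varphi_2})$. Each $\phi_i$ is either $\square_{[a_i,b_i]}\varphi_i$ or $\lozenge_{[a_i,b_i]}\varphi_i$ with $[a_i,b_i]\subseteq[0,T]$. For a signal $\mathbf{x}$, $\rho^{\square_{[a,b]}\varphi}(\mathbf{x})=\min_{t'\in[a,b]}\rho^\varphi(\mathbf{x}(t'))$, $\rho^{\lozenge_{[a,b]}\varphi}(\mathbf{x})=\max_{t'\in[a,b]}\rho^\varphi(\mathbf{x}(t'))$, $\rho^\Phi(\mathbf{x})=\min_i\rho^{\phi_i}(\mathbf{x})$, and $\mathbf{x}\models\Phi$ iff $\rho^\Phi(\mathbf{x})\geq0$. For each $i$ define an interval $I_i=[a_i,b_i]$ if $\phi_i$ is an always formula, and $I_i=[t_i^*,t_i^*+\delta]$ for some fixed $a_i\leq t_i^*<t_i^*+\delta\leq b_i$, $\delta>0$, if $\phi_i$ is an eventually formula. The active predicate set is $\Phi_a(t)=\{\varphi_i\mid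 t\in I_i\}$. An extended class $\mathcal{K}$ function is continuous, strictly increasing, with $\alpha(0)=0$. $\mathbf{x}_{x_0,\mathbf{u}}$ denotes the trajectory from $x_0$ under input $\mathbf{u}$. *)

From HB Require Import structures.
From mathcomp Require Import all_boot all_order all_algebra.
From mathcomp Require Import all_classical all_reals all_analysis.
Set Implicit Arguments. Unset Strict Implicit. Unset Printing Implicit Defensive.
Import Order.TTheory GRing.Theory Num.Theory.
Import numFieldNormedType.Exports.
Local Open Scope classical_set_scope.
Local Open Scope ring_scope.

Section STL.
Variables (R : realType) (n : nat).

(** Non-temporal STL formulas over states in R^n (row vectors). A predicate
    is given by a function h : R^n -> R, true at x iff h x >= 0. *)
Inductive stl_nt : Type :=
  | STrue
  | SPred of ('rV[R]_n -> R)
  | SNot of stl_nt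
  | SAnd of stl_nt & stl_nt
  | SOr of stl_nt & stl_nt.

(** Pointwise robustness.  rho^true is taken to be +oo, hence the
    extended-real codomain. *)
Fixpoint rho (phi : stl_nt) (x : 'rV[R]_n) : \bar R :=
  match phi with
  | STrue => +oo%E
  | SPred h => (h x)%:E
  | SNot p => (- rho p x)%E
  | SAnd p q => Order.min (rho p x) (rho q x)
  | SOr p q => Order.max (rho p x) (rho q x)
  end.

Inductive stl_t : Type :=
  | Always of R & R & stl_nt
  | Eventually of R & R & stl_nt.

Definition tf_a (p : stl_t) := match p with Always a _ _ | Eventually a _ _ => a end.
Definition tf_b (p : stl_t) := match p with Always _ b _ | Eventually _ b _ => b end.
Definition tf_phi (p : stl_t) := match p with Always _ _ q | Eventually _ _ q => q end.
Definition is_always (p : stl_t) := if p is Always _ _ _ then true else false.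

(** Robustness of a temporal formula along a signal xs : R -> R^n
    (min/max over [a,b] rendered as inf/sup). *)
Definition rho_t (p : stl_t) (xs : R -> 'rV[R]_n) : \bar R :=
  match p with
  | Always a b q => ereal_inf [set rho q (xs s) | s in `[a, b]]
  | Eventually a b q => ereal_sup [set rho q (xs s) | s in `[a, b]]
  end.

Definition rho_Phi (N : nat) (Phi : 'I_N -> stl_t) (xs : R -> 'rV[R]_n) : \bar R :=
  \big[Order.min/+oo%E]_(i < N) rho_t (Phi i) xs.

Definition sat (N : nat) (Phi : 'I_N -> stl_t) (xs : R -> 'rV[R]_n) : Prop :=
  (0 <= rho_Phi Phi xs)%E.

Definition in_I (N : nat) (Phi : 'I_N -> stl_t) (tstar : 'I_N -> R) (delta : R)
  (i : 'I_N) (t : R) : bool :=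
  if is_always (Phi i) then (tf_a (Phi i) <= t <= tf_b (Phi i))
  else (tstar i <= t <= tstar i + delta).

Definition active_nonempty N (Phi : 'I_N -> stl_t) tstar delta (t : R) : Prop :=
  exists i : 'I_N, in_I Phi tstar delta i t.

Definition inW (X : set 'rV[R]_n) (T : R) (x : 'rV[R]_n) (t : R) : Prop :=
  X x /\ 0 <= t <= T.

Definition in_S (X : set 'rV[R]_n) (T : R) N (Phi : 'I_N -> stl_t) tstar delta
  (x : 'rV[R]_n) (t : R) : Prop :=
  inW X T x t /\
  (0 <= \big[Order.min/+oo%E]_(i < N | in_I Phi tstar delta i t)
          rho (tf_phi (Phi i)) x)%E.

Definition dBdx (B : 'rV[R]_n * R -> R) (x : 'rV[R]_n) (t : R) (v : 'rV[R]_n) : R :=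
  'D_v (fun y => B (y, t)) x.
Definition dBdt (B : 'rV[R]_n * R -> R) (x : 'rV[R]_n) (t : R) : R :=
  derive1 (fun s => B (x, s)) t.

Definition C1_on (B : 'rV[R]_n * R -> R) (W : set ('rV[R]_n * R)) : Prop :=
  (forall p, W p -> differentiable B p) /\
  (forall v : 'rV[R]_n * R, {within W, continuous (fun p => 'd B p v)}).

End STL.

Definition ext_classK (R : realType) (alpha : R -> R) : Prop :=
  continuous alpha /\ {homo alpha : x y / x < y} /\ alpha 0 = 0.

(** Along the closed-loop trajectory, b(t) := B(x(t), t) satisfies the
    differential inequality b' >= -alpha(b).  If b ever became negative, take
    the last time t0 before that with b(t0) >= 0; the mean value theorem on
    [t0, t1] yields a point c where b(c) < 0, hence b'(c) >= -alpha(b(c)) > 0,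
    while b decreased from t0 to t1.  So b stays nonnegative, which by the
    sign conditions on B means (x(t), t) stays in C^Phi(t), a subset of
    S^Phi(t).  Every formula is then robustly satisfied at each time where it
    is active: on all of [a_i, b_i] for an always formula, and at t_i^* for an
    eventually formula, which suffices for the sup over [a_i, b_i]. *)
From HB Require Import structures.
From mathcomp Require Import all_boot all_order all_algebra.
From mathcomp Require Import all_classical all_reals all_analysis.
From mathcomp Require Import lra.
Set Implicit Arguments. Unset Strict Implicit.
Import Order.TTheory GRing.Theory Num.Theory.
Import numFieldNormedType.Exports.
Local Open Scope classical_set_scope.
Local Open Scope ring_scope.

Section ChainRule.
Variables (R : realType) (n : nat) (B : 'rV[R]_n * R -> R).

Lemma dBdx_diff x t v : differentiable B (x, t) -> dBdx B x t v = 'd B (x, t) (v, 0).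
Proof.
move=> dB; rewrite /dBdx.
have dpair : differentiable (fun y : 'rV[R]_n => (y, t)) x by exact: differentiable_pair.
have -> : (fun y => B (y, t)) = B \o (fun y => (y, t)) by [].
rewrite deriveE; last exact: differentiable_comp.
by rewrite diff_comp // /= diff_pair //= diff_cst (@diff_val _ _ _ _ _ id id).
Qed.

Lemma dBdt_diff x t : differentiable B (x, t) -> dBdt B x t = 'd B (x, t) (0, 1).
Proof.
move=> dB; rewrite /dBdt.
have dpair : differentiable (fun s : R => (x, s)) t by exact: differentiable_pair.
have -> : (fun s => B (x, s)) = B \o (fun s => (x, s)) by [].
rewrite derive1E deriveE; last exact: differentiable_comp.
by rewrite diff_comp // /= diff_pair //= diff_cst (@diff_val _ _ _ _ _ id id).
Qed.

Lemma is_derive_along (xs : R -> 'rV[R]_n) t v :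
  differentiable B (xs t, t) -> is_derive t 1 xs v ->
  is_derive t 1 (fun s => B (xs s, s)) (dBdx B (xs t) t v + dBdt B (xs t) t).
Proof.
move=> dB dxs.
have dx : differentiable xs t by apply/derivable1_diffP; exact: ex_derive.
have dgraph : differentiable (fun s : R => (xs s, s)) t by exact: differentiable_pair.
have -> : (fun s => B (xs s, s)) = B \o (fun s => (xs s, s)) by [].
have dcomp : differentiable (B \o (fun s => (xs s, s))) t by exact: differentiable_comp.
apply: DeriveDef; first exact: diff_derivable.
rewrite deriveE // diff_comp // /= diff_pair //= (@diff_val _ _ _ _ _ id id).
rewrite dBdx_diff // dBdt_diff // -linearD /= -derive1E' // derive1E derive_val.
by congr ('d B _ _); apply: injective_projections; rewrite /= ?addr0 ?add0r.
Qed.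

Lemma continuous_along (A : set R) (xs : R -> 'rV[R]_n) :
  {within A, continuous xs} -> (forall s, A s -> differentiable B (xs s, s)) ->
  {within A, continuous (fun s => B (xs s, s))}.
Proof.
move=> cxs dB.
have -> : (fun s => B (xs s, s)) = B \o (fun s => (xs s, s)) by [].
apply: within_continuous_comp.
  by move=> _ /set_mem [s /= As <-]; apply: differentiable_continuous; exact: dB.
apply/subspace_continuousP => s As.
have cvg_xs : xs @ within A (nbhs s) --> xs s.
  exact: (proj1 (subspace_continuousP _ _) cxs).
exact: (@cvg_pair _ _ _ _ _ _ _ _ _ xs id cvg_xs (cvg_within _)).
Qed.

End ChainRule.

Section Comparison.
Variable R : realType.
Implicit Types (a c : R) (b : R -> R).

Lemma last_nonneg_before a c b : a <= c ->
  {within `[a, c], continuous b} -> 0 <= b a -> b c < 0 ->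
  exists t0, [/\ a <= t0 < c, 0 <= b t0 & forall s, t0 < s <= c -> b s < 0].
Proof.
move=> ac cb ba bc.
pose S := [set s | a <= s <= c /\ 0 <= b s].
have aS : S a by rewrite /S /= lexx ac.
have supS : has_sup S by split; [exists a | exists c => s [/andP[_ ?] _]].
set t0 := sup S.
have ubS := sup_upper_bound supS.
have at0 : a <= t0 := ubS _ aS.
have t0c : t0 <= c by apply: ge_sup; [exists a | move=> s [/andP[_ ?] _]].
have neg s : t0 < s <= c -> b s < 0.
  move=> /andP[t0s sc]; rewrite ltNge; apply/negP => bs.
  have /ubS : S s by split => //; rewrite sc (le_trans at0) ?ltW.
  by rewrite leNgt t0s.
have bt0 : 0 <= b t0.
  rewrite leNgt; apply/negP => bt0.
  have : b @ within `[a, c] (nbhs t0) --> b t0.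
    apply: (proj1 (subspace_continuousP _ _) cb).
    by rewrite /= in_itv /= at0 t0c.
  move/cvgrPdist_lt => /(_ (- b t0)); rewrite oppr_gt0 => /(_ bt0).
  rewrite /within /= => /nbhs_ballP [e e0 near_t0].
  have [s Ss t0e_s] := sup_adherent e0 supS.
  have st0 : s <= t0 := ubS _ Ss.
  case: Ss => /andP[a_s sc] bs.
  have : `|t0 - s| < e by rewrite ger0_norm ?subr_ge0 //; move: t0e_s; rewrite -/t0; lra.
  move=> /near_t0 /(_ _); rewrite in_itv /= a_s sc => /(_ isT).
  by rewrite ltr_norml => /andP[+ _]; lra.
exists t0; split => //; rewrite at0 /= lt_neqAle t0c andbT.
by apply/eqP => t0E; move: bt0; rewrite t0E; lra.
Qed.

Lemma barrier_nonneg b db (alpha : R -> R) T :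
  (forall x, x < 0 -> alpha x < 0) ->
  {within `[0, T], continuous b} ->
  (forall t, 0 < t < T -> is_derive t 1 b (db t)) ->
  (forall t, 0 < t < T -> - alpha (b t) <= db t) ->
  0 <= b 0 -> forall t, 0 <= t <= T -> 0 <= b t.
Proof.
move=> alpha_neg cb b_db db_ge b0 t1 /andP[t10 t1T].
rewrite leNgt; apply/negP => bt1.
have sub01 : `[0, t1] `<=` `[0, T].
  by move=> s /=; rewrite !in_itv /= => /andP[-> /le_trans ->].
have [t0 [/andP[t00 t0t1] bt0 neg]] :=
  last_nonneg_before t10 (continuous_subspaceW sub01 cb) b0 bt1.
have inner s : s \in `]t0, t1[ -> 0 < s < T.
  by rewrite in_itv /= => /andP[t0s st1]; rewrite (le_lt_trans t00) ?(lt_le_trans st1).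
have sub0T : `[t0, t1] `<=` `[0, T].
  by move=> s /=; rewrite !in_itv /= => /andP[/(le_trans t00) -> /le_trans ->].
have [c cI mvt] := MVT t0t1 (fun s sI => b_db s (inner s sI))
  (continuous_subspaceW sub0T cb).
have bc : b c < 0 by apply: neg; move: cI; rewrite in_itv /= => /andP[-> /ltW].
have := alpha_neg _ bc; have := db_ge c (inner c cI).
have : 0 < t1 - t0 by rewrite subr_gt0.
move: mvt bt0 bt1; nra.
Qed.

End Comparison.

Section Robustness.
Variables (R : realType) (n N : nat) (Phi : 'I_N -> stl_t R n).
Variables (tstar : 'I_N -> R) (delta : R).

Lemma in_S_active_rho_ge0 X T x t i :
  in_S X T Phi tstar delta x t -> in_I Phi tstar delta i t ->
  (0 <= rho (tf_phi (Phi i)) x)%E.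
Proof. by move=> [_ Sge0] act; apply: le_trans Sge0 _; exact: bigmin_le_cond. Qed.

Lemma sat_of_active_rho_ge0 T (xs : R -> 'rV[R]_n) :
  (forall i, 0 <= tf_a (Phi i) /\ tf_a (Phi i) <= tf_b (Phi i) /\ tf_b (Phi i) <= T) ->
  (forall i, ~~ is_always (Phi i) ->
     tf_a (Phi i) <= tstar i /\ tstar i < tstar i + delta /\
     tstar i + delta <= tf_b (Phi i)) ->
  (forall i t, 0 <= t <= T -> in_I Phi tstar delta i t ->
     (0 <= rho (tf_phi (Phi i)) (xs t))%E) ->
  sat Phi xs.
Proof.
move=> hPhi hstar act; apply: le_bigmin => // i _.
move: (hPhi i) (hstar i) (act i); rewrite /in_I.
case: (Phi i) => [a b q|a b q] /= [a0 [_ bT]] hst {}act.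
- apply/ereal_infP => _ [s /= + <-]; rewrite in_itv /= => /andP[a_s sb].
  by apply: act; rewrite ?a_s ?sb // (le_trans a0 a_s) (le_trans sb bT).
- have [at_ [tt_ tb]] := hst isT.
  have tb' : tstar i <= b := le_trans (ltW tt_) tb.
  apply: le_trans (ereal_sup_ubound _); last first.
    by exists (tstar i); rewrite // /= in_itv /= at_ tb'.
  apply: act; first by rewrite (le_trans a0 at_) (le_trans tb' bT).
  by rewrite lexx ltW.
Qed.

End Robustness.

Theorem theorem2 (R : realType) (n m : nat)
  (X : set 'rV[R]_n) (U : set 'rV[R]_m)
  (f : 'rV[R]_n -> 'rV[R]_m -> 'rV[R]_n)
  (T : R) (N : nat) (Phi : 'I_N -> stl_t R n)
  (tstar : 'I_N -> R) (delta : R)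
  (C : 'rV[R]_n -> R -> Prop)
  (B : 'rV[R]_n * R -> R)
  (g : 'rV[R]_n -> R -> 'rV[R]_m)
  (alpha : R -> R)
  (x0 : 'rV[R]_n) (xs : R -> 'rV[R]_n) :
  compact X -> compact U ->
  [lipschitz f p.1 p.2 | p in X `*` U] ->
  (forall i, 0 <= tf_a (Phi i) /\ tf_a (Phi i) <= tf_b (Phi i) /\ tf_b (Phi i) <= T) ->
  0 < delta ->
  (forall i, ~~ is_always (Phi i) ->
     tf_a (Phi i) <= tstar i /\ tstar i < tstar i + delta /\
     tstar i + delta <= tf_b (Phi i)) ->
  (forall t, 0 <= t <= T -> active_nonempty Phi tstar delta t) ->
  (forall x t, C x t -> in_S X T Phi tstar delta x t) ->
  C1_on B [set p | inW X T p.1 p.2] ->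
  (forall x t, inW X T x t -> U (g x t)) ->
  {within [set p | inW X T p.1 p.2], continuous (fun p => g p.1 p.2)} ->
  ext_classK alpha ->
  (forall x t, C x t -> 0 <= B (x, t)) ->
  (forall x t, inW X T x t -> ~ C x t -> B (x, t) < 0) ->
  (forall x t, inW X T x t ->
     dBdx B x t (f x (g x t)) + dBdt B x t >= - alpha (B (x, t))) ->
  (* xs is a trajectory of dx/dt = f(x, u), u(t) = g(x(t), t), from x0 *)
  C x0 0 ->
  xs 0 = x0 ->
  (forall t, 0 <= t <= T -> X (xs t)) ->
  {within `[0, T], continuous xs} ->
  (forall t, 0 < t < T -> is_derive t 1 xs (f (xs t) (g (xs t) t))) ->
  (forall t, 0 <= t <= T -> C (xs t) t) /\ sat Phi xs.
Proof.
(* Compactness, the Lipschitz and continuity assumptions on f and g, and the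
   nonemptiness of the active set only serve to make the trajectory exist,
   and here it is given; of alpha only its sign on negative reals is used. *)
move=> _ _ _ hPhi _ hstar _ CS [dB _] _ _ [_ [alpha_incr alpha0]] CB0 nCB dB_ge
  C0 xs0 Xxs cxs dxs.
have inW_xs t : 0 <= t <= T -> inW X T (xs t) t by move=> tT; split => //; exact: Xxs.
have inW_open t : 0 < t < T -> inW X T (xs t) t.
  by move=> /andP[t0 tT]; apply: inW_xs; rewrite !ltW.
have alpha_neg x : x < 0 -> alpha x < 0 by rewrite -{2}alpha0; exact: alpha_incr.
have dB_xs t : 0 <= t <= T -> differentiable B (xs t, t).
  by move=> tT; apply: dB; exact: inW_xs.
have B_ge0 : forall t, 0 <= t <= T -> 0 <= B (xs t, t).
  apply: (@barrier_nonneg _ _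
    (fun t => dBdx B (xs t) t (f (xs t) (g (xs t) t)) + dBdt B (xs t) t) _ _
    alpha_neg).
  - by apply: continuous_along cxs _ => s; rewrite /= in_itv; exact: dB_xs.
  - move=> t tT; apply: is_derive_along (dxs t tT).
    by apply: dB_xs; case/andP: tT => t0 tT; rewrite !ltW.
  - by move=> t /inW_open /dB_ge.
  - by rewrite xs0; exact: CB0.
have C_xs t : 0 <= t <= T -> C (xs t) t.
  move=> tT; apply: contrapT => /(nCB _ _ (inW_xs t tT)).
  by rewrite ltNge B_ge0.
split => //; apply: sat_of_active_rho_ge0 hPhi hstar _ => i t tT.
exact/in_S_active_rho_ge0/CS/C_xs.
Qed.
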